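(* Let $n \geq 2$, $x \in \mathbb{R}^{n+1}$ with $|x| < 1$, and $\alpha \geq -n$. Then the weighted manifold $(S^n, g, \mu_x^{n,\alpha})$ satisfies the Curvature-Dimension condition $CD\left(n-1-\frac{n+\alpha}{4}, -\alpha\right)$.
   Context: $S^n \subset \mathbb{R}^{n+1}$ is the unit sphere with its canonical Riemannian metric $g$ (induced from the Euclidean metric $|\cdot|$ on $\mathbb{R}^{n+1}$), and $\sigma^n$ is the rotation-invariant (Haar) probability measure on $S^n$. For $n\ge 2$, $|x|<1$ and $\alpha\in\mathbb{R}$, $\mu_x^{n,\alpha}$ is the probability measure on $S^n$ given by $d\mu_x^{n,\alpha}(y) = \frac{c_x^{n,\alpha}}{|y-x|^{n+\alpha}}\, d\sigma^n(y)$, where $c_x^{n,\alpha}>0$ is the normalizing constant. Curvature-Dimension condition (tensorial definition): Let $(M^n,g)$ be a closed connected Riemannian manifold and $\mu$ a measure on $M$ with positive $C^2$ density $\Psi$ with respect to the Riemannian volume measure (equivalently, any constant multiple of it, e.g. with respect to $\sigma^n$ on the sphere). For $N \in (-\infty,\infty]$ define $\mathrm{Ric}_{g,\mu,N} := \mathrm{Ric}_g - \nabla_g^2 \log \Psi - \frac{1}{N-n} \nabla_g \log\Psi \otimes \nabla_g \log \Psi$, with conventions $1/\infty = 0$, $1/0 = +\infty$, $\infty\cdot 0 = 0$. For $\rho\in\mathbb{R}$, $(M,g,\mu)$ satisfies $CD(\rho,N)$ if $\mathrm{Ric}_{g,\mu,N} \geq \rho\, g$ as symmetric 2-tensors everywhere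 on $M$. (This tensorial definition is used for all $N$, including $N\in[0,n)$.) *)

From Stdlib Require Import Reals Lra.
Open Scope R_scope.

(* Points of R^{n+1} are represented as functions nat -> R; only the
   coordinates 0..n are used (sum_f_R0 f n sums indices 0..n). *)
Definition vec := nat -> R.

Definition dot (n : nat) (u v : vec) : R := sum_f_R0 (fun i => u i * v i) n.
Definition norm (n : nat) (u : vec) : R := sqrt (dot n u u).
Definition vsub (u v : vec) : vec := fun i => u i - v i.

Definition on_sphere (n : nat) (y : vec) : Prop := dot n y y = 1.

Definition geod (y v : vec) (t : R) : vec := fun i => cos t * y i + sin t * v i.

Definition second_order (F : R -> R) (d h : R) : Prop :=
  exists F' : R -> R,
    (forall t, derivable_pt_lim F t (F' t)) /\ F' 0 = d /\ derivable_pt_lim F' 0 h.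

(* Ricci curvature of the round unit sphere S^n evaluated on a unit tangent
   vector: Ric_g = (n-1) g. *)
Definition ric_sphere (n : nat) : R := INR n - 1.

(* Along the geodesic t |-> geod y v t with g(v,v)=1:
     d = g(grad log Psi, v),  h = Hess log Psi (v,v).
   Ric_{g,mu,N}(v,v) = (n-1) - h - 1/(N-n) d^2, with the conventions
   1/0 = +infinity and infinity * 0 = 0 when N = n. Since the tensor
   inequality Ric_{g,mu,N} >= rho g is homogeneous of degree 2, it suffices
   (and is equivalent) to test it on unit tangent vectors. *)
Definition CD_sphere (n : nat) (Psi : vec -> R) (rho N : R) : Prop :=
  forall y v : vec,
    on_sphere n y -> dot n v v = 1 -> dot n y v = 0 ->
    exists d h : R,
      second_order (fun t => ln (Psi (geod y v t))) d h /\
      (N = INR n -> d = 0 /\ ric_sphere n - h >= rho) /\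
      (N <> INR n -> ric_sphere n - h - / (N - INR n) * d ^ 2 >= rho).

(* Density of mu_x^{n,alpha} w.r.t. sigma^n, up to the positive constant c:
   y |-> c / |y - x|^{n+alpha}. *)
Definition density (n : nat) (alpha c : R) (x : vec) : vec -> R :=
  fun y => c * Rpower (norm n (vsub y x)) (- (INR n + alpha)).

(** Along the great circle [t |-> cos t y + sin t v] one has
    [|γ(t) - x|^2 = 1 + |x|^2 - 2 (a cos t + b sin t)] with [a = x·y], [b = x·v],
    so [log Ψ] is explicit and its first and second derivatives at [t = 0] are
    [d = k b / F] and [h = -k a / F + 2 k b^2 / F^2], where [k = n + α] and
    [F = 1 + |x|^2 - 2a].  Since [N - n = -k], the weighted Ricci curvature is
    [n - 1 + k (a F - b^2) / F^2], and [4 (a F - b^2) + F^2 = (1 + |x|^2)^2 - 4 (a^2 + b^2)]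
    is nonnegative by Bessel's inequality [a^2 + b^2 <= |x|^2] and [(1 - |x|^2)^2 >= 0]. *)

From Pilot Require Import Defs.
From Stdlib Require Import Reals Lra Psatz FunctionalExtensionality.
From Coquelicot Require Import Coquelicot.
(* Coquelicot's [norm] shadows [Defs.norm]; re-import to restore it. *)
Import Defs.
Open Scope R_scope.

Lemma dot_self_ge0 (n : nat) (u : vec) : 0 <= dot n u u.
Proof. unfold dot; induction n; simpl; nra. Qed.

Lemma dot_self_lt1 (n : nat) (u : vec) : norm n u < 1 -> dot n u u < 1.
Proof.
  unfold norm; intro Hu.
  pose proof (sqrt_sqrt _ (dot_self_ge0 n u)); pose proof (sqrt_pos (dot n u u)).
  nra.
Qed.

Lemma dot_comb3 (n : nat) (p q s : R) (u w z : vec) :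
  let e := fun i => p * u i + q * w i + s * z i in
  dot n e e = p ^ 2 * dot n u u + q ^ 2 * dot n w w + s ^ 2 * dot n z z
              + 2 * p * q * dot n u w + 2 * p * s * dot n u z + 2 * q * s * dot n w z.
Proof. unfold dot; induction n; simpl; [ring | rewrite IHn; ring]. Qed.

Definition chord2 (r a b t : R) : R := 1 + r - 2 * (a * cos t + b * sin t).

Section OrthonormalFrame.

Variables (n : nat) (x y v : vec).
Hypotheses (Hy : on_sphere n y) (Hv : dot n v v = 1) (Hyv : dot n y v = 0).

Lemma bessel_orthonormal : dot n y x ^ 2 + dot n v x ^ 2 <= dot n x x.
Proof.
  set (a := dot n y x); set (b := dot n v x).
  pose proof (dot_self_ge0 n (fun i => (- a) * y i + (- b) * v i + 1 * x i)) as H.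
  rewrite dot_comb3, Hy, Hv, Hyv in H; fold a b in H.
  nra.
Qed.

Lemma dist2_geod (t : R) :
  dot n (vsub (geod y v t) x) (vsub (geod y v t) x)
  = chord2 (dot n x x) (dot n y x) (dot n v x) t.
Proof.
  unfold chord2.
  replace (vsub (geod y v t) x) with (fun i => cos t * y i + sin t * v i + (-1) * x i)
    by (apply functional_extensionality; intro i; unfold vsub, geod; ring).
  rewrite dot_comb3, Hy, Hv, Hyv.
  pose proof (sin2_cos2 t); unfold Rsqr in *; nra.
Qed.

End OrthonormalFrame.

Lemma chord2_pos (r a b t : R) : a ^ 2 + b ^ 2 <= r -> r < 1 -> 0 < chord2 r a b t.
Proof.
  intros Hab Hr; unfold chord2.
  pose proof (sin2_cos2 t); unfold Rsqr in *.
  (* Cauchy-Schwarz: [(a cos t + b sin t)^2 + (a sin t - b cos t)^2 = a^2 + b^2]. *)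
  assert (Hcs : (a * cos t + b * sin t) ^ 2 <= r).
  { pose proof (pow2_ge_0 (a * sin t - b * cos t)). nra. }
  nra.
Qed.

Lemma ln_scaled_Rpower_sqrt (c q e : R) :
  0 < c -> 0 < q -> ln (c * Rpower (sqrt q) e) = ln c + e / 2 * ln q.
Proof.
  intros Hc Hq.
  pose proof (sqrt_lt_R0 q Hq).
  unfold Rpower; rewrite ln_mult, ln_exp by (auto; apply exp_pos).
  rewrite <- (sqrt_sqrt q) at 2 by lra.
  rewrite ln_mult by lra; field.
Qed.

Section LogChord.

Variables (r a b k C : R).
Hypotheses (Hab : a ^ 2 + b ^ 2 <= r) (Hr : r < 1).

Let F0 := 1 + r - 2 * a.

Lemma chord2_0 : chord2 r a b 0 = F0.
Proof. unfold chord2, F0; rewrite cos_0, sin_0; ring. Qed.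

Lemma second_order_log_chord2 :
  second_order (fun t => C - k / 2 * ln (chord2 r a b t))
    (k * b / F0) (- k * a / F0 + 2 * k * b ^ 2 / F0 ^ 2).
Proof.
  pose proof (chord2_pos r a b 0 Hab Hr) as H0; rewrite chord2_0 in H0.
  exists (fun t => - k / 2 * ((2 * a * sin t - 2 * b * cos t) / chord2 r a b t)).
  repeat split.
  - intro t; pose proof (chord2_pos r a b t Hab Hr) as Ht; unfold chord2 in *.
    apply is_derive_Reals; auto_derive; [lra | field; lra].
  - rewrite chord2_0, cos_0, sin_0; field; lra.
  - pose proof (chord2_pos r a b 0 Hab Hr) as Ht; unfold chord2 in *.
    apply is_derive_Reals; auto_derive; [lra |].
    rewrite cos_0, sin_0 in *; unfold F0; field; lra.
Qed.

Lemma weighted_ricci_log_chord2 (m : R) :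
  0 < k ->
  m - (- k * a / F0 + 2 * k * b ^ 2 / F0 ^ 2) - / (- k) * (k * b / F0) ^ 2 >= m - k / 4.
Proof.
  intro Hk.
  pose proof (chord2_pos r a b 0 Hab Hr) as H0; rewrite chord2_0 in H0.
  replace (m - (- k * a / F0 + 2 * k * b ^ 2 / F0 ^ 2) - / (- k) * (k * b / F0) ^ 2)
    with (m - k / 4 + k * ((F0 + 2 * a) ^ 2 - 4 * (a ^ 2 + b ^ 2)) / (4 * F0 ^ 2))
    by (field; lra).
  assert (0 <= (F0 + 2 * a) ^ 2 - 4 * (a ^ 2 + b ^ 2)) by (unfold F0; nra).
  assert (0 <= k * ((F0 + 2 * a) ^ 2 - 4 * (a ^ 2 + b ^ 2)) / (4 * F0 ^ 2))
    by (apply Rdiv_le_0_compat; nra).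
  lra.
Qed.

End LogChord.

Lemma ln_density_geod (n : nat) (x y v : vec) (alpha c : R) :
  0 < c -> on_sphere n y -> dot n v v = 1 -> dot n y v = 0 -> norm n x < 1 ->
  (fun t => ln (density n alpha c x (geod y v t)))
  = (fun t => ln c - (INR n + alpha) / 2
                     * ln (chord2 (dot n x x) (dot n y x) (dot n v x) t)).
Proof.
  intros Hc Hy Hv Hyv Hx; apply functional_extensionality; intro t.
  unfold density, norm; rewrite dist2_geod by assumption.
  rewrite ln_scaled_Rpower_sqrt; [lra | auto |].
  apply chord2_pos; [apply bessel_orthonormal | apply dot_self_lt1]; assumption.
Qed.

Theorem theorem1p1 :
  forall (n : nat) (x : vec) (alpha c : R),
    (2 <= n)%nat -> norm n x < 1 -> alpha >= - INR n -> 0 < c ->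
    CD_sphere n (density n alpha c x) (INR n - 1 - (INR n + alpha) / 4) (- alpha).
Proof.
  intros n x alpha c _ Hx Ha Hc y v Hy Hv Hyv.
  set (k := INR n + alpha).
  pose proof (bessel_orthonormal n x y v Hy Hv Hyv) as Hab.
  pose proof (dot_self_lt1 n x Hx) as Hr.
  set (r := dot n x x) in *; set (a := dot n y x) in *; set (b := dot n v x) in *.
  set (F0 := 1 + r - 2 * a).
  exists (k * b / F0), (- k * a / F0 + 2 * k * b ^ 2 / F0 ^ 2).
  rewrite ln_density_geod by assumption.
  split; [apply second_order_log_chord2; assumption |].
  unfold ric_sphere; split.
  - intro HN; assert (Hk : k = 0) by (unfold k; lra).
    assert (0 < F0) by (unfold F0; rewrite <- (chord2_0 r a b); apply chord2_pos; auto).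
    rewrite Hk; split; [field; lra |].
    replace (- 0 * a / F0 + 2 * 0 * b ^ 2 / F0 ^ 2) with 0 by (field; lra); lra.
  - intro HN; replace (- alpha - INR n) with (- k) by (unfold k; ring).
    apply weighted_ricci_log_chord2; auto; unfold k in *; lra.
Qed.
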